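(* Let $p,q\ge 3$. If there exists a $p$-core of type $(x_1,\dots,x_p)$ and a $q$-core of type $(y_1,\dots,y_q)$, then there exists a $(p+q-1)$-core of type $(x_1,\dots,x_{p-1},x_p+y_1,y_2,\dots,y_q)$.
   Context: For $p\ge 3$, a $p$-core of type $(x_1,\dots,x_p)$ consists of pairwise disjoint finite sets $C_1,\dots,C_p$ (the classes) with $|C_i|=x_i$, together with sets $B_1,\dots,B_p\subseteq C_1\cup\dots\cup C_p$ such that $B_1\cup\dots\cup B_p=C_1\cup\dots\cup C_p$, and: (i) $B_i\cap C_i=\emptyset$ and $|B_i\cap C_j|=1$ for all $j\ne i$ (so $|B_i|=p-1$); (ii) $|B_i\cap B_j|+p$ is odd for all $1\le i,j\le p$. *)

From mathcomp Require Import all_boot.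
Set Implicit Arguments. Unset Strict Implicit. Unset Printing Implicit Defensive.

(* A p-core of type (x_0, ..., x_{p-1}) (0-indexed; x : nat -> nat, only the
   values x 0, ..., x (p-1) matter) with ground elements in a finite type T:
   classes C i and sets B i indexed by 'I_p. *)
Definition is_core (T : finType) (p : nat) (x : nat -> nat)
  (C B : 'I_p -> {set T}) : Prop :=
  [/\ (forall i j : 'I_p, i != j -> [disjoint C i & C j]),
      (forall i : 'I_p, #|C i| = x (val i)),
      (\bigcup_(i < p) B i = \bigcup_(i < p) C i),
      (forall i : 'I_p, B i :&: C i = set0) &
      (forall i j : 'I_p, i != j -> #|B i :&: C j| = 1)] /\
  (forall i j : 'I_p, odd (#|B i :&: B j| + p)).

Definition core_exists (p : nat) (x : nat -> nat) : Prop :=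
  exists (T : finType) (C B : 'I_p -> {set T}), @is_core T p x C B.

Definition glue_type (p : nat) (x y : nat -> nat) (k : nat) : nat :=
  if k < p.-1 then x k
  else if k == p.-1 then x p.-1 + y 0
  else y (k - p.-1).

From mathcomp Require Import all_boot zify.
Set Implicit Arguments. Unset Strict Implicit. Unset Printing Implicit Defensive.

(* The glued core lives on the disjoint union of the two ground sets.  Index
   [a] of the glued core reads the first core at [min a (p-1)] and the second
   at the truncated difference [a - (p-1)]: its block is the union of the
   corresponding blocks, and its class is the corresponding class of each core
   that index [a] belongs to, so index [p-1] carries both [C_p] and [D_1].
   All intersection sizes split as a sum over the two cores, and the parity
   condition survives because [(u + p) + (v + q)] even forces
   [u + v + (p + q - 1)] odd. *)

Section SumSet.
Variables T1 T2 : finType.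

Definition sumset (X : {set T1}) (Y : {set T2}) : {set T1 + T2} :=
  [set z | match z with inl a => a \in X | inr b => b \in Y end].

Lemma sumsetI X Y X' Y' :
  sumset X Y :&: sumset X' Y' = sumset (X :&: X') (Y :&: Y').
Proof. by apply/setP => -[a|b]; rewrite !inE. Qed.

Lemma card_sumset X Y : #|sumset X Y| = #|X| + #|Y|.
Proof.
rewrite -!sum1_card big_mkcond big_sumType /=.
rewrite [\sum_(i in X) 1]big_mkcond [\sum_(i in Y) 1]big_mkcond /=.
by congr (_ + _); apply: eq_bigr => i _; rewrite inE.
Qed.

Lemma bigcup_sumset (I : finType) (P : pred I) (X : I -> {set T1})
    (Y : I -> {set T2}) :
  \bigcup_(i | P i) sumset (X i) (Y i) =
  sumset (\bigcup_(i | P i) X i) (\bigcup_(i | P i) Y i).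
Proof.
by apply/setP => -[a|b]; rewrite inE;
  apply/bigcupP/bigcupP => -[i Pi]; rewrite ?inE => z; exists i; rewrite ?inE.
Qed.
End SumSet.

Lemma bigcup_onto (I J T : finType) (P : pred I) (f : I -> J)
    (F : J -> {set T}) :
  (forall j, exists2 i, P i & f i = j) ->
  \bigcup_(i | P i) F (f i) = \bigcup_j F j.
Proof.
move=> f_onto; apply/setP => t; apply/bigcupP/bigcupP => [[i _ Ft]|[j _ Ft]].
  by exists (f i).
by have [i Pi fij] := f_onto j; exists i; rewrite ?fij.
Qed.

Lemma card_core_BC (T : finType) (p : nat) (x : nat -> nat)
    (C B : 'I_p -> {set T}) :
  is_core x C B -> forall i j, #|B i :&: C j| = (i != j).
Proof.
case=> [[_ _ _ BC0 BC1] _] i j; have [->|ij] := eqVneq i j.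
  by rewrite BC0 cards0.
exact: BC1.
Qed.

Section Glue.
Variables (T1 T2 : finType) (m n : nat) (x y : nat -> nat).
Variables (C B : 'I_m.+1 -> {set T1}) (D E : 'I_n.+1 -> {set T2}).
Hypothesis coreCB : is_core x C B.
Hypothesis coreDE : is_core y D E.

Local Notation N := (m.+1 + n.+1 - 1).

Definition lidx (a : 'I_N) : 'I_m.+1 := inord (minn a m).
Definition ridx (a : 'I_N) : 'I_n.+1 := inord (a - m).

Lemma lidxE a : lidx a = minn a m :> nat.
Proof. by rewrite /lidx inordK // ltnS geq_minr. Qed.

Lemma ridxE a : ridx a = a - m :> nat.
Proof. by rewrite /ridx inordK //; have := ltn_ord a; lia. Qed.

Definition glue_class (a : 'I_N) : {set T1 + T2} :=
  sumset (if a <= m then C (lidx a) else set0)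
         (if m <= a then D (ridx a) else set0).

Definition glue_block (a : 'I_N) : {set T1 + T2} :=
  sumset (B (lidx a)) (E (ridx a)).

Lemma glue_class_disjoint a b :
  a != b -> [disjoint glue_class a & glue_class b].
Proof.
case: coreCB coreDE => [[C_disj _ _ _ _] _] [[D_disj _ _ _ _] _] ab.
rewrite -setI_eq0 -cards_eq0 /glue_class sumsetI card_sumset addn_eq0.
apply/andP; split; rewrite cards_eq0.
  case: ifP => am; case: ifP => bm; rewrite ?set0I ?setI0 ?eqxx //.
  rewrite setI_eq0; apply: C_disj; move: ab.
  by rewrite -!val_eqE /= !lidxE; lia.
case: ifP => am; case: ifP => bm; rewrite ?set0I ?setI0 ?eqxx //.
rewrite setI_eq0; apply: D_disj; move: ab.
by rewrite -!val_eqE /= !ridxE; lia.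
Qed.

Lemma card_glue_class a : #|glue_class a| = glue_type m.+1 x y a.
Proof.
case: coreCB coreDE => [[_ C_card _ _ _] _] [[_ D_card _ _ _] _].
rewrite card_sumset /glue_type /=.
have := lidxE a; have := ridxE a.
case: (ltngtP a m) => am /= ra la.
- by rewrite cards0 addn0 C_card /= la.
- by rewrite cards0 D_card /= ra.
- by rewrite C_card D_card /= la ra am subnn.
Qed.

Lemma bigcup_glue_block : \bigcup_a glue_block a = \bigcup_a glue_class a.
Proof.
case: coreCB coreDE => [[_ _ BC_cover _ _] _] [[_ _ ED_cover _ _] _].
have lidx_onto (P : pred 'I_N) : (forall a : 'I_N, a <= m -> P a) ->
    forall i, exists2 a, P a & lidx a = i.
  move=> leP i; have iN : (i : nat) < N by have := ltn_ord i; lia.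
  exists (Ordinal iN); first by apply: leP; rewrite /= -ltnS.
  by apply/val_inj; rewrite /= lidxE /=; have := ltn_ord i; lia.
have ridx_onto (P : pred 'I_N) : (forall a : 'I_N, m <= a -> P a) ->
    forall j, exists2 a, P a & ridx a = j.
  move=> geP j; have jN : (j + m : nat) < N by have := ltn_ord j; lia.
  exists (Ordinal jN); first by apply: geP; rewrite /= leq_addl.
  by apply/val_inj; rewrite /= ridxE /= addnK.
rewrite /glue_block /glue_class !bigcup_sumset -!big_mkcond /=.
rewrite (bigcup_onto B (lidx_onto _ _)) // (bigcup_onto E (ridx_onto _ _)) //.
rewrite (bigcup_onto C (lidx_onto _ _)) // (bigcup_onto D (ridx_onto _ _)) //.
by rewrite BC_cover ED_cover.
Qed.

Lemma card_glue_block_class a b : #|glue_block a :&: glue_class b| = (a != b).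
Proof.
rewrite /glue_block /glue_class sumsetI card_sumset.
rewrite !(fun_if (setI _)) !setI0.
have := ltn_ord a; have := ltn_ord b.
case: ifP => bm; case: ifP => mb;
  rewrite ?cards0 ?(card_core_BC coreCB) ?(card_core_BC coreDE);
  rewrite -!val_eqE /= ?lidxE ?ridxE; repeat case: eqP; move=> /= *; lia.
Qed.

Lemma odd_card_glue_block a b : odd (#|glue_block a :&: glue_block b| + N).
Proof.
case: coreCB coreDE => [_ B_odd] [_ E_odd].
rewrite /glue_block sumsetI card_sumset.
have := B_odd (lidx a) (lidx b); have := E_odd (ridx a) (ridx b).
rewrite (_ : N = (m + n).+1); last by lia.
by rewrite !oddD /= !oddD; do 4!case: odd.
Qed.

Lemma glue_core : is_core (glue_type m.+1 x y) glue_class glue_block.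
Proof.
split; last exact: odd_card_glue_block.
split.
- exact: glue_class_disjoint.
- exact: card_glue_class.
- exact: bigcup_glue_block.
- by move=> a; apply/eqP; rewrite -cards_eq0 card_glue_block_class eqxx.
- by move=> a b ab; rewrite card_glue_block_class ab.
Qed.
End Glue.

Theorem lemma3p4 (p q : nat) (x y : nat -> nat) :
  3 <= p -> 3 <= q ->
  core_exists p x -> core_exists q y ->
  core_exists (p + q - 1) (glue_type p x y).
Proof.
case: p => // m _; case: q => // n _.
move=> [T1 [C [B coreCB]]] [T2 [D [E coreDE]]].
exists (T1 + T2)%type, (glue_class C D), (glue_block B E).
exact: glue_core.
Qed.
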